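(* Let $H$ be an infinite-dimensional (not necessarily separable) Hilbert space and let $\mathcal{T}\subseteq B_1$. For $T\in\mathcal{T}$ define $\psi_T:B_1\to B_1$ by $\psi_T(A)=TA$. Then $\mathcal{T}$, regarded as a family of maps $H_1\to H_1$, is uniformly equicontinuous (UEC) if and only if the family $\{\psi_T\}_{T\in\mathcal{T}}$ of maps $B_1\to B_1$ is UEC.
   Context: $H_1$ is the closed unit ball of $H$ and $B_1$ the closed unit ball of $B(H)$. $H_1$ carries the (weak) uniformity whose basic entourages are the sets $\{(x,y)\in H_1\times H_1: |\langle x-y,z_i\rangle|<\epsilon,\ i=1,\dots,N\}$ with $z_i\in H_1$, $N\in\mathbb{N}$, $\epsilon>0$; $B_1$ carries the (weak operator) uniformity whose basic entourages are the sets $\{(A,B)\in B_1\times B_1: |\langle (A-B)w_i,z_i\rangle|<\epsilon,\ i=1,\dots,N\}$ with $w_i,z_i\in H_1$, $N\in\mathbb{N}$, $\epsilon>0$. A family $\mathcal{F}$ of maps from a uniform space $X$ to itself is uniformly equicontinuous (UEC) if for every entourage $U$ there is an entourage $W$ such that $(x,y)\in W$ implies $(f(x),f(y))\in U$ for all $f\in\mathcal{F}$. *)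

From Stdlib Require Import Reals List.
Open Scope R_scope.
Set Implicit Arguments.

Definition C := (R * R)%type.
Definition C0 : C := (0, 0).
Definition C1 : C := (1, 0).
Definition Cadd (a b : C) : C := (fst a + fst b, snd a + snd b).
Definition Cmul (a b : C) : C :=
  (fst a * fst b - snd a * snd b, fst a * snd b + snd a * fst b).
Definition Cconj (a : C) : C := (fst a, - snd a).
Definition Cmod (a : C) : R := sqrt (fst a * fst a + snd a * snd a).

Record HilbertSpace := {
  hV :> Type;
  vzero : hV;
  vadd : hV -> hV -> hV;
  vopp : hV -> hV;
  vscal : C -> hV -> hV;
  inner : hV -> hV -> C;
  vadd_assoc : forall x y z, vadd x (vadd y z) = vadd (vadd x y) z;
  vadd_comm : forall x y, vadd x y = vadd y x;
  vadd_0 : forall x, vadd x vzero = x;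
  vadd_opp : forall x, vadd x (vopp x) = vzero;
  vscal_1 : forall x, vscal C1 x = x;
  vscal_assoc : forall a b x, vscal a (vscal b x) = vscal (Cmul a b) x;
  vscal_distr_v : forall a x y, vscal a (vadd x y) = vadd (vscal a x) (vscal a y);
  vscal_distr_s : forall a b x, vscal (Cadd a b) x = vadd (vscal a x) (vscal b x);
  inner_add_l : forall x y z, inner (vadd x y) z = Cadd (inner x z) (inner y z);
  inner_scal_l : forall a x y, inner (vscal a x) y = Cmul a (inner x y);
  inner_conj_sym : forall x y, inner y x = Cconj (inner x y);
  inner_pos : forall x, 0 <= fst (inner x x);
  inner_def : forall x, inner x x = C0 -> x = vzero;
  complete : forall u : nat -> hV,
    (forall eps, eps > 0 -> exists N, forall m n, (N <= m)%nat -> (N <= n)%nat ->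
        sqrt (fst (inner (vadd (u m) (vopp (u n))) (vadd (u m) (vopp (u n))))) < eps) ->
    exists l, forall eps, eps > 0 -> exists N, forall n, (N <= n)%nat ->
        sqrt (fst (inner (vadd (u n) (vopp l)) (vadd (u n) (vopp l)))) < eps
}.

Arguments vzero {h}. Arguments vadd {h}. Arguments vopp {h}.
Arguments vscal {h}. Arguments inner {h}.

Section H.
Variable H : HilbertSpace.

Definition vsub (x y : H) : H := vadd x (vopp y).
Definition hnorm (x : H) : R := sqrt (fst (inner x x)).

Fixpoint lincomb (cs : list C) (vs : list H) : H :=
  match cs, vs with
  | c :: cs', v :: vs' => vadd (vscal c v) (lincomb cs' vs')
  | _, _ => vzero
  end.

Definition lin_indep (vs : list H) : Prop :=
  forall cs : list C, length cs = length vs -> lincomb cs vs = vzero ->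
    Forall (fun c => c = C0) cs.

Definition infinite_dimensional : Prop :=
  forall n : nat, exists vs : list H, length vs = n /\ lin_indep vs.

Definition inH1 (x : H) : Prop := hnorm x <= 1.

Definition linear_op (T : H -> H) : Prop :=
  (forall x y, T (vadd x y) = vadd (T x) (T y)) /\
  (forall a x, T (vscal a x) = vscal a (T x)).

Definition inB1 (T : H -> H) : Prop :=
  linear_op T /\ forall x, hnorm (T x) <= hnorm x.

(* basic entourages of the weak uniformity on H_1:
   indexed by (z_1..z_N, eps) with z_i in H_1, eps > 0 *)
Definition weak_index_ok (p : list H * R) : Prop :=
  snd p > 0 /\ forall z, In z (fst p) -> inH1 z.
Definition weak_ent (p : list H * R) (x y : H) : Prop :=
  forall z, In z (fst p) -> Cmod (inner (vsub x y) z) < snd p.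

(* basic entourages of the weak operator uniformity on B_1:
   indexed by ((w_1,z_1)..(w_N,z_N), eps) with w_i, z_i in H_1, eps > 0 *)
Definition wot_index_ok (p : list (H * H) * R) : Prop :=
  snd p > 0 /\ forall wz, In wz (fst p) -> inH1 (fst wz) /\ inH1 (snd wz).
Definition wot_ent (p : list (H * H) * R) (A B : H -> H) : Prop :=
  forall wz, In wz (fst p) ->
    Cmod (inner (vsub (A (fst wz)) (B (fst wz))) (snd wz)) < snd p.

End H.

(* Uniform equicontinuity of a family (f_j)_{j in J, member j} of self-maps of a
   uniform space X (carrier given by dom), whose uniformity is generated by the
   base of entourages (ent i)_{i : I, ok i}: for every (basic) entourage U there
   is a (basic) entourage W with (x,y) in W -> (f x, f y) in U for all f. *)
Definition UEC {X I J : Type} (dom : X -> Prop) (ok : I -> Prop)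
  (ent : I -> X -> X -> Prop) (member : J -> Prop) (f : J -> X -> X) : Prop :=
  forall U, ok U -> exists W, ok W /\
    forall x y, dom x -> dom y -> ent W x y ->
      forall j, member j -> ent U (f j x) (f j y).

From Pilot Require Import Defs.
From Stdlib Require Import Reals List Lra Psatz.
Open Scope R_scope.

(* (=>) A basic WOT entourage is given by pairs (w_i, z_i) and eps.  Since
        every A in B_1 maps w_i into H_1, weak closeness of A w_i and B w_i
        tested against all z_j is transported by the weak UEC hypothesis to
        closeness of T A w_i and T B w_i against z_i.
   (<=) Fix a unit vector e (it exists since H is not the zero space) and send
        x in H_1 to the rank-one operator  rank1 e x = <., e> x  in B_1.  It
        recovers x as (rank1 e x) e, and  |<(rank1 e x - rank1 e y) w, z>| is
        at most |<x - y, z>| for w in H_1 (Cauchy-Schwarz), so weak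
        closeness of x, y gives WOT closeness of the rank-one operators, and
        WOT closeness of T(rank1 e x), T(rank1 e y) at (e, z) is weak
        closeness of T x, T y against z. *)

Lemma Cmod_mul (a b : Defs.C) : Cmod (Cmul a b) = Cmod a * Cmod b.
Proof.
  destruct a as [a1 a2], b as [b1 b2]; unfold Cmod, Cmul; simpl.
  rewrite <- sqrt_mult_alt by nra. f_equal; ring.
Qed.

Section InnerProduct.
Variable X : HilbertSpace.

Lemma inner_zero_l (z : X) : inner vzero z = Defs.C0.
Proof.
  pose proof (inner_add_l X vzero vzero z) as E. rewrite vadd_0 in E.
  destruct (inner vzero z) as [p q]. unfold Cadd in E; simpl in E.
  injection E; intros. unfold Defs.C0; f_equal; lra.
Qed.

Lemma inner_opp_l (u z : X) :
  inner (vopp u) z = (- fst (inner u z), - snd (inner u z)).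
Proof.
  pose proof (inner_add_l X u (vopp u) z) as E.
  rewrite vadd_opp, inner_zero_l in E.
  destruct (inner u z) as [a b], (inner (vopp u) z) as [c d].
  unfold Cadd, Defs.C0 in E; simpl in *. injection E; intros; f_equal; lra.
Qed.

Lemma inner_sub_l (u v z : X) :
  inner (vsub X u v) z =
  (fst (inner u z) - fst (inner v z), snd (inner u z) - snd (inner v z)).
Proof.
  unfold vsub; rewrite inner_add_l, inner_opp_l; unfold Cadd; simpl; f_equal; ring.
Qed.

Lemma inner_scal_r a (x y : X) : inner x (vscal a y) = Cmul (Cconj a) (inner x y).
Proof.
  rewrite (inner_conj_sym X (vscal a y) x), inner_scal_l, (inner_conj_sym X x y).
  destruct a as [a1 a2], (inner x y) as [p q]; unfold Cconj, Cmul; simpl; f_equal; ring.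
Qed.

Lemma inner_add_r (x y z : X) : inner x (vadd y z) = Cadd (inner x y) (inner x z).
Proof.
  rewrite (inner_conj_sym X (vadd y z) x), inner_add_l,
    (inner_conj_sym X x y), (inner_conj_sym X x z).
  destruct (inner y x) as [a b], (inner z x) as [c d]; unfold Cconj, Cadd; simpl; f_equal; ring.
Qed.

Lemma inner_self_real (x : X) : snd (inner x x) = 0.
Proof.
  pose proof (inner_conj_sym X x x) as E.
  destruct (inner x x) as [a b]; unfold Cconj in E; simpl in *.
  injection E; intros; lra.
Qed.

Lemma inner_sub_scal_l c (x y z : X) :
  inner (vsub X (vscal c x) (vscal c y)) z = Cmul c (inner (vsub X x y) z).
Proof.
  rewrite !inner_sub_l, !inner_scal_l.
  destruct c as [a b], (inner x z) as [p q], (inner y z) as [r t].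
  unfold Cmul; simpl; f_equal; ring.
Qed.

Lemma inH1_iff (x : X) : inH1 X x <-> fst (inner x x) <= 1.
Proof.
  unfold inH1, hnorm. pose proof (inner_pos X x) as P. split; intro Hx.
  - apply sqrt_le_0; [exact P | lra |]. rewrite sqrt_1; exact Hx.
  - rewrite <- sqrt_1. apply sqrt_le_1_alt; exact Hx.
Qed.

Lemma B1_maps_H1 (A : X -> X) (x : X) : inB1 X A -> inH1 X x -> inH1 X (A x).
Proof. intros [_ HA] Hx. unfold inH1 in *. eapply Rle_trans; [apply HA | exact Hx]. Qed.

Lemma cauchy_schwarz_unit (v e : X) : inner e e = Defs.C1 ->
  fst (inner v e) * fst (inner v e) + snd (inner v e) * snd (inner v e)
  <= fst (inner v v).
Proof.
  intro He.
  pose proof (inner_pos X (vadd v (vscal (- fst (inner v e), - snd (inner v e)) e))) as P.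
  rewrite inner_add_l, !inner_add_r, !inner_scal_l, !inner_scal_r, He in P.
  rewrite (inner_conj_sym X v e) in P.
  pose proof (inner_self_real v) as Rv.
  destruct (inner v e) as [a b], (inner v v) as [p q].
  unfold Cadd, Cmul, Cconj, Defs.C1 in *; simpl in *. nra.
Qed.

Lemma Cmod_inner_unit_le (w e : X) : inner e e = Defs.C1 -> inH1 X w ->
  Cmod (inner w e) <= 1.
Proof.
  intros He Hw. apply inH1_iff in Hw. unfold Cmod. rewrite <- sqrt_1.
  apply sqrt_le_1_alt. pose proof (cauchy_schwarz_unit w e He). lra.
Qed.

(* An infinite-dimensional space has a unit vector: normalize the vector of a
   linearly independent singleton. *)
Lemma exists_unit_vector : infinite_dimensional X -> exists e : X, inner e e = Defs.C1.
Proof.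
  intros Hinf. destruct (Hinf 1%nat) as [vs [Hl Hli]].
  destruct vs as [|v [|? ?]]; simpl in Hl; try discriminate.
  assert (Hv : v <> vzero).
  { intro E. subst v. specialize (Hli (Defs.C1 :: nil) eq_refl).
    simpl in Hli. rewrite vscal_1, vadd_0 in Hli. specialize (Hli eq_refl).
    inversion Hli as [|? ? Hc]. unfold Defs.C1, Defs.C0 in Hc. injection Hc; lra. }
  pose proof (inner_pos X v) as P. pose proof (inner_self_real v) as Rv.
  assert (Pn : 0 < fst (inner v v)).
  { destruct (Rle_lt_or_eq_dec _ _ P) as [h|h]; auto.
    exfalso. apply Hv. apply inner_def. destruct (inner v v) as [p q].
    simpl in *. unfold Defs.C0; f_equal; auto. }
  set (n := fst (inner v v)) in *.
  pose proof (sqrt_lt_R0 n Pn) as Hs.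
  pose proof (sqrt_sqrt n (Rlt_le _ _ Pn)) as Ss.
  exists (vscal (/ sqrt n, 0) v).
  rewrite inner_scal_l, inner_scal_r.
  replace (inner v v) with (n, 0) by (unfold n; destruct (inner v v); simpl in *; subst; auto).
  unfold Cmul, Cconj, Defs.C1; simpl. clearbody n. set (s := sqrt n) in *. clearbody s.
  subst n. f_equal; field; lra.
Qed.

End InnerProduct.

Section RankOne.
Variable X : HilbertSpace.
Variable e : X.
Hypothesis e_unit : inner e e = Defs.C1.

Definition rank1 (x : X) : X -> X := fun v => vscal (inner v e) x.

Lemma rank1_at_e (x : X) : rank1 x e = x.
Proof. unfold rank1. rewrite e_unit. apply vscal_1. Qed.

Lemma rank1_in_B1 (x : X) : inH1 X x -> inB1 X (rank1 x).
Proof.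
  intros Hx. unfold rank1. split; [split|].
  - intros a b. rewrite inner_add_l, vscal_distr_s. reflexivity.
  - intros a b. rewrite inner_scal_l, vscal_assoc. reflexivity.
  - intros v. unfold hnorm. apply sqrt_le_1_alt.
    rewrite inner_scal_l, inner_scal_r.
    pose proof (cauchy_schwarz_unit X v e e_unit) as Cs.
    pose proof (inner_self_real X x) as Rx.
    pose proof (inner_pos X x) as Px.
    apply inH1_iff in Hx.
    destruct (inner v e) as [a b], (inner x x) as [p q].
    unfold Cmul, Cconj; simpl in *. subst q. nra.
Qed.

Lemma rank1_test_le (x y w z : X) : inH1 X w ->
  Cmod (inner (vsub X (rank1 x w) (rank1 y w)) z) <= Cmod (inner (vsub X x y) z).
Proof.
  intros Hw. unfold rank1. rewrite inner_sub_scal_l, Cmod_mul.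
  pose proof (Cmod_inner_unit_le X w e e_unit Hw).
  assert (0 <= Cmod (inner (vsub X x y) z)) by apply sqrt_pos.
  nra.
Qed.

End RankOne.

Section Directions.
Variable X : HilbertSpace.
Variable Tfam : (X -> X) -> Prop.

Lemma uec_weak_to_wot :
  UEC (inH1 X) (weak_index_ok X) (weak_ent X) Tfam (fun T x => T x) ->
  UEC (inB1 X) (wot_index_ok X) (wot_ent X) Tfam (fun T A => fun x => T (A x)).
Proof.
  intros Hw [L eps] [Heps HL]. simpl in Heps, HL.
  destruct (Hw (map snd L, eps)) as [[Y d] [[Hd HY] HW]].
  { split; simpl; auto. intros z Hz. apply in_map_iff in Hz as [[w z'] [<- Hin]].
    apply (HL _ Hin). }
  simpl in Hd, HY.
  (* test every w_i against every vector of the weak entourage Y *)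
  exists (list_prod (map fst L) Y, d). split.
  - split; simpl; auto. intros [w y] Hin. apply in_prod_iff in Hin as [H1 H2].
    split; simpl; auto. apply in_map_iff in H1 as [[w' z'] [<- Hin]]. apply (HL _ Hin).
  - intros A B HA HB Hent T HTm [w z] Hin. simpl.
    assert (Hw1 : inH1 X w) by apply (HL _ Hin).
    apply (HW (A w) (B w) (B1_maps_H1 X A w HA Hw1) (B1_maps_H1 X B w HB Hw1)).
    + intros y Hy. apply (Hent (w, y)). simpl. apply in_prod; auto.
      apply in_map_iff. exists (w, z); auto.
    + exact HTm.
    + simpl. apply in_map_iff. exists (w, z); auto.
Qed.

Lemma uec_wot_to_weak (e : X) : inner e e = Defs.C1 ->
  UEC (inB1 X) (wot_index_ok X) (wot_ent X) Tfam (fun T A => fun x => T (A x)) ->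
  UEC (inH1 X) (weak_index_ok X) (weak_ent X) Tfam (fun T x => T x).
Proof.
  intros He Hp [Z eps] [Heps HZ]. simpl in Heps, HZ.
  assert (He1 : inH1 X e) by (apply inH1_iff; rewrite He; simpl; lra).
  destruct (Hp (map (fun z => (e, z)) Z, eps)) as [[L d] [[Hd HL] HW]].
  { split; simpl; auto. intros wz Hin. apply in_map_iff in Hin as [z [<- Hz]].
    simpl; auto. }
  simpl in Hd, HL.
  exists (map snd L, d). split.
  - split; simpl; auto. intros y Hy. apply in_map_iff in Hy as [[w y'] [<- Hin]].
    apply (HL _ Hin).
  - intros x y Hx Hy Hent T HTm z Hz.
    assert (Hrank : wot_ent X (L, d) (rank1 X e x) (rank1 X e y)).
    { intros [w y'] Hin. simpl.
      eapply Rle_lt_trans; [apply rank1_test_le; [exact He | apply (HL _ Hin)] |].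
      apply Hent. simpl. apply in_map_iff. exists (w, y'); auto. }
    pose proof (HW _ _ (rank1_in_B1 X e He x Hx) (rank1_in_B1 X e He y Hy)
                  Hrank T HTm (e, z)) as K.
    simpl in K. rewrite !rank1_at_e in K by exact He. apply K.
    apply in_map_iff. exists z; auto.
Qed.

End Directions.

Theorem proposition1 (H : HilbertSpace) (Hinf : infinite_dimensional H)
  (Tfam : (H -> H) -> Prop) (HT : forall T, Tfam T -> inB1 H T) :
  UEC (inH1 H) (weak_index_ok H) (weak_ent H) Tfam (fun T x => T x)
  <->
  UEC (inB1 H) (wot_index_ok H) (wot_ent H) Tfam
      (fun T (A : H -> H) => fun x => T (A x)).
Proof.
  destruct (exists_unit_vector H Hinf) as [e He].
  split.
  - apply uec_weak_to_wot.
  - apply (uec_wot_to_weak H Tfam e He).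
Qed.
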